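(* Let $A$ be a general metric space, $M$ a left module on $A$ and $\mathcal F$ a filter on $A$. Then $\sup_{x\in A}[M^-(\mathcal F)(x),M(x)]\ \le\ \lim^+_{\mathcal F}M$, with equality if $\mathcal F$ is weakly flat. In particular, for weakly flat filters $\mathcal F_1,\mathcal F_2$, $$\sup_{x\in A}[M^-(\mathcal F_1)(x),M^-(\mathcal F_2)(x)]=\lim^+_{x\in\mathcal F_1}\lim^-_{y\in\mathcal F_2}A(x,y).$$
   Context: $[0,\infty]$ with $+$ ($x+\infty=\infty$), $[x,y]=\max(y-x,0)$ for finite $x,y$, $[x,\infty]=\infty$ for $x<\infty$, $[\infty,y]=0$; $\inf\emptyset=\infty$, $\sup\emptyset=0$. A general metric space $A$ is a set with $A(-,-):A\times A\to[0,\infty]$, $A(x,x)=0$, $A(x,z)\le A(x,y)+A(y,z)$. A left module is $M:A\to[0,\infty]$ with $M(x)\le M(y)+A(x,y)$. A filter on $A$ is a nonempty set of nonempty subsets closed under finite intersections and supersets; $\lim^+_{\mathcal F}t=\inf_{f\in\mathcal F}\sup_{x\in f}t(x)$, $\lim^-_{\mathcal F}t=\sup_{f\in\mathcal F}\inf_{x\in f}t(x)$; $M^-(\mathcal F)(x)=\lim^-_{y\in\mathcal F}A(x,y)$; $\mathcal F$ is weakly flat iff $\lim^+_{\mathcal F}M^-(\mathcal F)=0$. *)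

From HB Require Import structures.
From mathcomp Require Import all_boot all_order all_algebra.
From mathcomp Require Import all_classical all_reals ereal.
Set Implicit Arguments. Unset Strict Implicit. Unset Printing Implicit Defensive.
Import Order.TTheory GRing.Theory Num.Theory.
Local Open Scope classical_set_scope.
Local Open Scope ereal_scope.

(* Values live in [0, +oo] embedded in \bar R (all relevant quantities are
   nonnegative). *)

(* supremum with the convention sup(empty) = 0 *)
Definition esup0 {R : realType} (S : set (\bar R)) : \bar R :=
  ereal_sup (S `|` [set 0]).

(* infimum with inf(empty) = +oo (ereal_inf already satisfies this) *)
Definition einf {R : realType} (S : set (\bar R)) : \bar R := ereal_inf S.

(* truncated difference [x, y] on [0, +oo] *)
Definition tsub {R : realType} (x y : \bar R) : \bar R :=
  if x == +oo then 0
  else if y == +oo then +oo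
  else maxe (y - x) 0.

Definition is_gen_metric {R : realType} {T : Type} (d : T -> T -> \bar R) :=
  (forall x y, 0 <= d x y) /\ (forall x, d x x = 0) /\
  (forall x y z, d x z <= d x y + d y z).

Definition is_left_module {R : realType} {T : Type}
    (d : T -> T -> \bar R) (M : T -> \bar R) :=
  (forall x, 0 <= M x) /\ (forall x y, M x <= M y + d x y).

Definition is_filter {T : Type} (F : set (set T)) :=
  (exists f, F f) /\ (forall f, F f -> f !=set0) /\
  (forall f g, F f -> F g -> F (f `&` g)) /\
  (forall f g, F f -> f `<=` g -> F g).

Definition limsupF {R : realType} {T : Type} (F : set (set T)) (t : T -> \bar R)
  : \bar R := einf [set esup0 (t @` f) | f in F].

Definition liminfF {R : realType} {T : Type} (F : set (set T)) (t : T -> \bar R)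
  : \bar R := esup0 [set einf (t @` f) | f in F].

Definition Mminus {R : realType} {T : Type} (d : T -> T -> \bar R)
  (F : set (set T)) (x : T) : \bar R := liminfF F (fun y => d x y).

Definition weakly_flat {R : realType} {T : Type} (d : T -> T -> \bar R)
  (F : set (set T)) := limsupF F (Mminus d F) = 0.

From mathcomp Require Import all_boot all_order all_algebra.
From mathcomp Require Import all_classical all_reals ereal.
Import Order.TTheory GRing.Theory Num.Theory.
Local Open Scope classical_set_scope.
Local Open Scope ereal_scope.

(* For [f] in [F] and [y] in [f], [M x <= M y + d x y <= sup_f M + d x y];
   taking the infimum over [y] gives [M x <= sup_f M + M^-(F)(x)], i.e.
   [[M^-(F)(x), M x] <= sup_f M], whence the inequality. Conversely, if [L]
   is the left-hand side then [M y <= L + M^-(F)(y)] for every [y], so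
   [sup_f M <= L + sup_f M^-(F)], and weak flatness makes the last term
   arbitrarily small along [F]. Finally [M^-(F2)] is itself a left module by
   the triangle inequality, so the last claim is the equality case applied to
   it. *)

Section ExtendedLattice.
Variable R : realType.
Implicit Types (S : set (\bar R)) (a b c m : \bar R).

Lemma esup0_ubound S a : S a -> a <= esup0 S.
Proof. by move=> Sa; apply: ereal_sup_ubound; left. Qed.

Lemma esup0_ge0 S : 0 <= esup0 S.
Proof. by apply: ereal_sup_ubound; right. Qed.

Lemma ge_esup0 S m : (forall a, S a -> a <= m) -> 0 <= m -> esup0 S <= m.
Proof. by move=> Sm m0; apply: ge_ereal_sup => a [/Sm|->]. Qed.

Lemma einf_lbound S a : S a -> einf S <= a.
Proof. exact: ereal_inf_lbound. Qed.

Lemma le_einf S m : (forall a, S a -> m <= a) -> m <= einf S.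
Proof. by move=> Sm; apply: le_ereal_inf_tmp => a /Sm. Qed.

Lemma ge0_pinfty_or_fin {a} : 0 <= a -> a = +oo \/ a \is a fin_num.
Proof. by case: a => [r| |] //= _; [right|left]. Qed.

Lemma tsub_le_addE a b c : 0 <= b -> 0 <= c -> (tsub c a <= b) = (a <= b + c).
Proof.
move=> b0 c0; rewrite /tsub.
case: (ge0_pinfty_or_fin c0) => [->|cf].
  by rewrite eqxx b0 addey ?leey //; case: b b0.
have -> : (c == +oo) = false by case: c cf {c0}.
case: eqP => [->|_]; last by rewrite ge_max b0 andbT leeBlDr.
case: (ge0_pinfty_or_fin b0) => [->|bf].
  by rewrite addye ?leey //; case: c cf {c0}.
by case: b bf {b0}; case: c cf {c0}.
Qed.

Lemma le_add_einf T (t : T -> \bar R) (f : set T) a b :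
  (forall y, f y -> 0 <= t y) -> 0 <= b ->
  (forall y, f y -> a <= b + t y) -> a <= b + einf (t @` f).
Proof.
move=> t0 b0 abt.
case: (ge0_pinfty_or_fin b0) => [->|bf].
  have inf0 : 0 <= einf (t @` f) by apply: le_einf => _ [y fy <-]; exact: t0.
  by rewrite addye ?leey // gt_eqF // (lt_le_trans ltNy0 inf0).
by rewrite -leeBlDl //; apply: le_einf => _ [y fy <-]; rewrite leeBlDl // abt.
Qed.

End ExtendedLattice.

Section LeftModules.
Context {R : realType} {T : Type} (d : T -> T -> \bar R).

Lemma esup_tsub_le_limsupF (M : T -> \bar R) (F : set (set T)) :
  (forall x y, 0 <= d x y) -> is_left_module d M ->
  esup0 [set tsub (Mminus d F x) (M x) | x in setT] <= limsupF F M.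
Proof.
move=> d0 [_ Mlip].
have limsup0 : 0 <= limsupF F M.
  by apply: le_einf => _ [f _ <-]; exact: esup0_ge0.
apply: ge_esup0 => // _ [x _ <-]; apply: le_einf => _ [f Ff <-].
rewrite tsub_le_addE ?esup0_ge0 //.
have inf_le_Mminus : einf (d x @` f) <= Mminus d F x.
  by apply: esup0_ubound; exists f.
apply: (le_trans _ (leeD (lexx _) inf_le_Mminus)).
apply: le_add_einf => [y _||y fy]; rewrite ?d0 ?esup0_ge0 //.
by apply: (le_trans (Mlip x y)); rewrite leeD2r // esup0_ubound //; exists y.
Qed.

Lemma limsupF_le_esup_tsub (M : T -> \bar R) (F : set (set T)) :
  weakly_flat d F ->
  limsupF F M <= esup0 [set tsub (Mminus d F x) (M x) | x in setT].
Proof.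
move=> flat; set L := esup0 _.
have M_le x : M x <= L + Mminus d F x.
  by rewrite -tsub_le_addE ?esup0_ge0 //; apply: esup0_ubound; exists x.
apply/lee_addgt0Pr => e e0.
have : einf [set esup0 (Mminus d F @` f) | f in F] < e%:E.
  by move: flat; rewrite /weakly_flat /limsupF => ->; rewrite lte_fin.
case/ereal_inf_lt => _ [f Ff <-] sup_lt_e.
apply: (@le_trans _ _ (esup0 (M @` f))); first by apply: einf_lbound; exists f.
apply: (le_trans _ (leeD (lexx L) (ltW sup_lt_e))).
apply: ge_esup0 => [_ [y fy <-]|]; last by rewrite adde_ge0 ?esup0_ge0.
by apply: (le_trans (M_le y)); rewrite leeD2l // esup0_ubound //; exists y.
Qed.

Lemma Mminus_left_module (F : set (set T)) :
  is_gen_metric d -> is_left_module d (Mminus d F).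
Proof.
move=> [d0 [_ tri]]; split=> [x|x y]; first exact: esup0_ge0.
apply: ge_esup0 => [_ [g Fg <-]|]; last by rewrite adde_ge0 ?esup0_ge0.
have inf_le_Mminus : einf (d y @` g) <= Mminus d F y.
  by apply: esup0_ubound; exists g.
apply: (le_trans _ (leeD inf_le_Mminus (lexx (d x y)))); rewrite addeC.
apply: le_add_einf => [z _||z gz]; rewrite ?d0 //.
by apply: (le_trans _ (tri x y z)); apply: einf_lbound; exists z.
Qed.

End LeftModules.

Theorem mainTheorem15 (R : realType) (T : Type) (d : T -> T -> \bar R)
  (M : T -> \bar R) (F : set (set T)) :
  is_gen_metric d -> is_left_module d M -> is_filter F ->
  (esup0 [set tsub (Mminus d F x) (M x) | x in setT] <= limsupF F M)
  /\ (weakly_flat d F ->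
      esup0 [set tsub (Mminus d F x) (M x) | x in setT] = limsupF F M)
  /\ (forall F1 F2 : set (set T), is_filter F1 -> is_filter F2 ->
      weakly_flat d F1 -> weakly_flat d F2 ->
      esup0 [set tsub (Mminus d F1 x) (Mminus d F2 x) | x in setT]
      = limsupF F1 (fun x => liminfF F2 (fun y => d x y))).
Proof.
move=> dmetric Mmod _; have d0 := dmetric.1.
split; first exact: esup_tsub_le_limsupF.
split=> [flat|F1 F2 _ _ flat1 _].
  by apply/eqP; rewrite eq_le esup_tsub_le_limsupF // limsupF_le_esup_tsub.
have M2mod := Mminus_left_module d F2 dmetric.
apply/eqP; rewrite eq_le (esup_tsub_le_limsupF d _ F1 d0 M2mod).
exact: (limsupF_le_esup_tsub d (Mminus d F2) F1 flat1).
Qed.
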